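(* Let $N\in\mathbb{N}$ with $N\ge3$ and $\phi(x):=\cot\left(\frac{\pi}{2}\left(\frac{x}{\sqrt6}+\frac12\right)\right)$. There is an odd polynomial $P_{\mathrm{odd}}$ such that for all real $x$ with $|x|\le\frac12$, \[ \left|\phi(x)-\sum_{m=0}^{N+1}\frac{\phi^{(2m)}(0)}{(2m)!}x^{2m}-P_{\mathrm{odd}}(x)\right|\le 2.3\left(\frac23\right)^{N+2}x^{2N+4}. \] *)

From Stdlib Require Import Reals.
From Coquelicot Require Import Coquelicot.
Open Scope R_scope.

Definition cot (y : R) : R := cos y / sin y.

Definition phi (x : R) : R := cot ((PI / 2) * (x / sqrt 6 + 1 / 2)).

Definition even_taylor (N : nat) (x : R) : R :=
  sum_f_R0 (fun m => Derive_n phi (2 * m) 0 / INR (Stdlib.Arith.Factorial.fact (2 * m)) * x ^ (2 * m)) (N + 1).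

Definition odd_poly (d : nat) (c : nat -> R) (x : R) : R :=
  sum_f_R0 (fun k => c k * x ^ (2 * k + 1)) d.

From Stdlib Require Import Reals Lra Lia Factorial.
From Coquelicot Require Import Coquelicot.
Open Scope R_scope.

(* Write phi x = cot t with t = PI/4 + a x, a = PI / (2 sqrt 6), and split
   cot t = 1/t + (cot t - 1/t).  The Taylor expansion of 1/t at PI/4 is geometric, with
   exact remainder ((PI/4 - t) / (PI/4))^(n+1) / t.  The n-th derivative of cot t - 1/t
   is (-1)^n (P_n(cot t) - n!/t^(n+1)), where P_n are the derivative polynomials of tan;
   differentiating cot t = (cot (t/2) - tan (t/2)) / 2 n times and iterating the
   halving (the contribution at t/2^J vanishes as J grows) bounds it by
   2^-n tan^(n)(t/2).  All derivatives of tan are nonnegative, so Taylor's formula gives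
   tan^(n)(u) <= n! tan(u + h) / h^n, and with h = PI/4 both remainders of order 2N+4
   are at most a constant times (2 x^2 / 3)^(N+2). *)

(* [deriv_poly k] is the polynomial P_k with tan^(k) = P_k o tan and
   cot^(k) = (-1)^k P_k o cot, i.e. P_0 = X and P_(k+1) = (1 + X^2) P_k'. *)
Fixpoint deriv_poly_coef (k j : nat) : R :=
  match k with
  | O => if Nat.eqb j 1 then 1 else 0
  | S k' => INR (S j) * deriv_poly_coef k' (S j) +
            match j with O => 0 | S j' => INR j' * deriv_poly_coef k' j' end
  end.

Definition deriv_poly (k : nat) (c : R) : R :=
  sum_f_R0 (fun j => deriv_poly_coef k j * c ^ j) (S k).

Lemma deriv_poly_coef_ge0 k j : 0 <= deriv_poly_coef k j.
Proof.
  revert j; induction k as [|k IHk]; intros j; cbn [deriv_poly_coef].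
  - destruct j as [|[|j]]; simpl; lra.
  - assert (0 <= INR (S j) * deriv_poly_coef k (S j))
      by (apply Rmult_le_pos; [apply pos_INR | apply IHk]).
    destruct j as [|j]; [lra|].
    assert (0 <= INR j * deriv_poly_coef k j)
      by (apply Rmult_le_pos; [apply pos_INR | apply IHk]).
    lra.
Qed.

Lemma deriv_poly_coef_gt k j : (S k < j)%nat -> deriv_poly_coef k j = 0.
Proof.
  revert j; induction k as [|k IHk]; intros j Hj; cbn [deriv_poly_coef].
  - destruct j as [|[|j]]; [lia | lia | reflexivity].
  - rewrite (IHk (S j)) by lia.
    destruct j as [|j]; [lia|].
    rewrite (IHk j) by lia. ring.
Qed.

Lemma deriv_poly_coef_lead k : deriv_poly_coef k (S k) = INR (fact k).
Proof.
  induction k as [|k IHk]; cbn [deriv_poly_coef]; [reflexivity|].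
  rewrite (deriv_poly_coef_gt k (S (S (S k)))) by lia.
  rewrite IHk, fact_simpl, mult_INR. ring.
Qed.

Lemma deriv_poly_O c : deriv_poly 0 c = c.
Proof. unfold deriv_poly. simpl. ring. Qed.

Lemma deriv_poly_ge0 k c : 0 <= c -> 0 <= deriv_poly k c.
Proof.
  intros Hc. apply cond_pos_sum. intros j.
  apply Rmult_le_pos; [apply deriv_poly_coef_ge0 | apply pow_le; exact Hc].
Qed.

Lemma deriv_poly_le_compat k c d : 0 <= c -> c <= d -> deriv_poly k c <= deriv_poly k d.
Proof.
  intros Hc Hcd. apply sum_Rle. intros j _.
  apply Rmult_le_compat_l; [apply deriv_poly_coef_ge0 | apply pow_incr; lra].
Qed.

Lemma is_derive_sum_pow (p : nat -> R) n c :
  is_derive (fun x => sum_f_R0 (fun j => p j * x ^ j) n) c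
            (sum_f_R0 (fun j => p j * (INR j * c ^ pred j)) n).
Proof.
  induction n as [|n IHn]; cbn [sum_f_R0].
  - apply is_derive_scal. auto_derive; [exact I | simpl; ring].
  - apply (is_derive_plus (fun x => sum_f_R0 (fun j => p j * x ^ j) n)); [exact IHn|].
    apply is_derive_scal. auto_derive; [exact I | simpl; ring].
Qed.

Lemma sum_derive_pow_shiftl (p : nat -> R) n c :
  sum_f_R0 (fun j => INR (S j) * p (S j) * c ^ j) n =
  sum_f_R0 (fun j => p j * (INR j * c ^ pred j)) (S n).
Proof.
  induction n as [|n IHn]; [simpl; ring|].
  rewrite tech5, IHn, (tech5 _ (S n)). simpl pred. ring.
Qed.

Lemma sum_derive_pow_shiftr (p : nat -> R) n c :
  sum_f_R0 (fun j => match j with O => 0 | S j' => INR j' * p j' end * c ^ j) (S n) =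
  sum_f_R0 (fun j => p j * (INR j * c ^ pred j) * c ^ 2) n.
Proof.
  induction n as [|n IHn]; [simpl; ring|].
  rewrite tech5, IHn, (tech5 _ n). simpl. ring.
Qed.

Lemma deriv_poly_S k c :
  sum_f_R0 (fun j => deriv_poly_coef k j * (INR j * c ^ pred j)) (S k) * (1 + c ^ 2) =
  deriv_poly (S k) c.
Proof.
  transitivity
    (sum_f_R0 (fun j => INR (S j) * deriv_poly_coef k (S j) * c ^ j) (S (S k)) +
     sum_f_R0 (fun j => match j with O => 0 | S j' => INR j' * deriv_poly_coef k j' end
                        * c ^ j) (S (S k))).
  - rewrite sum_derive_pow_shiftl, sum_derive_pow_shiftr.
    rewrite (tech5 _ (S (S k))), (tech5 _ (S k)).
    rewrite (deriv_poly_coef_gt k (S (S (S k)))), (deriv_poly_coef_gt k (S (S k))) by lia.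
    rewrite Rmult_plus_distr_l, Rmult_1_r, <- scal_sum. ring.
  - rewrite <- plus_sum. apply sum_eq. intros j _. simpl. ring.
Qed.

Lemma is_derive_deriv_poly_comp (g : R -> R) x s k :
  is_derive g x (s * (1 + g x ^ 2)) ->
  is_derive (fun y => deriv_poly k (g y)) x (s * deriv_poly (S k) (g x)).
Proof.
  intros Hg. rewrite <- deriv_poly_S.
  replace (s * _) with
    (scal (s * (1 + g x ^ 2))
       (sum_f_R0 (fun j => deriv_poly_coef k j * (INR j * g x ^ pred j)) (S k)))
    by (unfold scal; simpl; unfold mult; simpl; ring).
  apply (is_derive_comp (deriv_poly k) g); [apply is_derive_sum_pow | exact Hg].
Qed.

Section ClosedFormDerivatives.

Variables (f : R -> R) (g : nat -> R -> R) (lo hi : R).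
Hypothesis f_eq : forall x, lo < x < hi -> f x = g 0%nat x.
Hypothesis g_derive : forall k x, lo < x < hi -> is_derive (g k) x (g (S k) x).

Lemma Derive_n_closed_form k x :
  lo < x < hi -> Derive_n f k x = g k x /\ ex_derive_n f k x.
Proof.
  revert x; induction k as [|k IHk]; intros x Hx; [split; [apply f_eq | exact I]; exact Hx|].
  assert (Hloc : locally x (fun y => g k y = Derive_n f k y)).
  { apply (locally_interval _ x lo hi); try exact (proj1 Hx); try exact (proj2 Hx).
    intros y Hlo Hhi. symmetry. apply IHk. split; assumption. }
  split; simpl.
  - rewrite <- (Derive_ext_loc _ _ x Hloc). apply is_derive_unique, g_derive, Hx.
  - apply (ex_derive_ext_loc _ _ x Hloc). eexists. apply g_derive, Hx.
Qed.

Lemma taylor_lagrange_closed_form_lt n x y :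
  lo < x -> x < y -> y < hi ->
  exists z, x < z < y /\
    f y = sum_f_R0 (fun m => (y - x) ^ m / INR (fact m) * g m x) n
          + (y - x) ^ S n / INR (fact (S n)) * g (S n) z.
Proof.
  intros Hlo Hxy Hhi.
  destruct (Taylor_Lagrange f n x y Hxy) as [z [Hz E]].
  - intros t Ht k _. apply Derive_n_closed_form. lra.
  - exists z. split; [exact Hz|]. rewrite E, (proj1 (Derive_n_closed_form _ z ltac:(lra))).
    f_equal. apply sum_eq. intros m _. rewrite (proj1 (Derive_n_closed_form m x ltac:(lra))).
    reflexivity.
Qed.

End ClosedFormDerivatives.

Lemma taylor_lagrange_closed_form (f : R -> R) (g : nat -> R -> R) lo hi :
  (forall x, lo < x < hi -> f x = g 0%nat x) ->
  (forall k x, lo < x < hi -> is_derive (g k) x (g (S k) x)) ->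
  forall n x y, lo < x < hi -> lo < y < hi ->
  exists z, Rmin x y <= z <= Rmax x y /\
    f y = sum_f_R0 (fun m => (y - x) ^ m / INR (fact m) * g m x) n
          + (y - x) ^ S n / INR (fact (S n)) * g (S n) z.
Proof.
  intros f_eq g_derive n x y Hx Hy.
  destruct (Rtotal_order x y) as [Hlt | [<- | Hgt]].
  - destruct (taylor_lagrange_closed_form_lt f g lo hi f_eq g_derive n x y)
      as [z [Hz E]]; try lra.
    exists z. rewrite Rmin_left, Rmax_right by lra. split; [lra | exact E].
  - exists x. rewrite Rmin_left, Rmax_left by lra. split; [lra|].
    rewrite Rminus_diag, pow_i by lia.
    induction n as [|n IHn]; [simpl; rewrite f_eq by exact Hx; field|].
    rewrite tech5, pow_i, IHn by lia. unfold Rdiv. ring.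
  - (* reflect through [z |-> -z], where the k-th derivative picks up a sign [(-1)^k] *)
    set (gr := fun k z => (-1) ^ k * g k (- z)).
    assert (gr_derive : forall k z, - hi < z < - lo -> is_derive (gr k) z (gr (S k) z)).
    { intros k z Hz. unfold gr.
      replace ((-1) ^ S k * g (S k) (- z)) with ((-1) ^ k * (-1 * g (S k) (- z)))
        by (simpl; ring).
      apply is_derive_scal.
      apply (is_derive_comp (g k) Ropp); [apply g_derive; lra|].
      auto_derive; [exact I | ring]. }
    destruct (taylor_lagrange_closed_form_lt (fun z => f (- z)) gr (- hi) (- lo)
                ltac:(intros z Hz; unfold gr; simpl; rewrite Rmult_1_l; apply f_eq; lra)
                gr_derive n (- x) (- y)) as [z [Hz E]]; try lra.
    exists (- z). rewrite Rmin_right, Rmax_left by lra. split; [lra|].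
    rewrite Ropp_involutive in E. rewrite E. unfold gr. rewrite !Ropp_involutive.
    assert (Hsign : forall m, (- y - - x) ^ m * (-1) ^ m = (y - x) ^ m)
      by (intros m; rewrite <- Rpow_mult_distr; f_equal; ring).
    f_equal.
    + apply sum_eq. intros m _. rewrite <- Hsign. unfold Rdiv. ring.
    + rewrite <- Hsign. unfold Rdiv. ring.
Qed.

Lemma PI_gt_3 : 3 < PI.
Proof. pose proof PI2_3_2. lra. Qed.

Lemma is_derive_cot x : sin x <> 0 -> is_derive cot x (-1 * (1 + cot x ^ 2)).
Proof.
  intros Hs. unfold cot.
  replace (-1 * (1 + (cos x / sin x) ^ 2)) with ((- sin x * sin x - cos x * cos x) / sin x ^ 2).
  - apply is_derive_div; [apply is_derive_cos | apply is_derive_sin | exact Hs].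
  - pose proof (sin2_cos2 x) as H. unfold Rsqr in H.
    field_simplify; [lra | exact Hs..].
Qed.

Lemma is_derive_deriv_poly_cot k t :
  0 < t < PI -> is_derive (fun s => deriv_poly k (cot s)) t (- deriv_poly (S k) (cot t)).
Proof.
  intros Ht. replace (- deriv_poly (S k) (cot t)) with (-1 * deriv_poly (S k) (cot t)) by ring.
  apply is_derive_deriv_poly_comp, is_derive_cot.
  pose proof (sin_gt_0 t (proj1 Ht) (proj2 Ht)). lra.
Qed.

Lemma is_derive_deriv_poly_tan k v :
  - (PI / 2) < v < PI / 2 -> is_derive (fun s => deriv_poly k (tan s)) v (deriv_poly (S k) (tan v)).
Proof.
  intros Hv. rewrite <- Rmult_1_l.
  apply is_derive_deriv_poly_comp.
  replace (1 * (1 + tan v ^ 2)) with (tan v ^ 2 + 1) by ring.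
  apply is_derive_tan. pose proof (cos_gt_0 v ltac:(lra) (proj2 Hv)). lra.
Qed.

Lemma sum_f_R0_ge_last (u : nat -> R) n : (forall j, 0 <= u j) -> u n <= sum_f_R0 u n.
Proof.
  intros Hu. destruct n as [|n]; [simpl; lra|].
  rewrite tech5. pose proof (cond_pos_sum u n Hu). lra.
Qed.

Lemma deriv_poly_tan_ge0 n u : 0 <= u < PI / 2 -> 0 <= deriv_poly n (tan u).
Proof.
  intros [[Hu | <-] Hu']; apply deriv_poly_ge0; [left; apply tan_gt_0; lra | rewrite tan_0; lra].
Qed.

(* All derivatives of [tan] are nonnegative on [[0, PI/2)], so the n-th Taylor
   term at [u] is dominated by [tan (u + h)]. *)
Lemma deriv_poly_tan_le n u h :
  0 <= u -> 0 < h -> u + h < PI / 2 ->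
  deriv_poly n (tan u) <= INR (fact n) * tan (u + h) / h ^ n.
Proof.
  intros Hu Hh Huh. pose proof PI_gt_3.
  destruct (taylor_lagrange_closed_form_lt tan (fun k v => deriv_poly k (tan v))
              (- (PI / 2)) (PI / 2) (fun v _ => eq_sym (deriv_poly_O (tan v)))
              (fun k v Hv => is_derive_deriv_poly_tan k v Hv) n u (u + h))
    as [z [Hz E]]; try lra.
  replace (u + h - u) with h in E by ring.
  assert (Hterm : forall m v, 0 <= v < PI / 2 ->
                    0 <= h ^ m / INR (fact m) * deriv_poly m (tan v)).
  { intros m v Hv. apply Rmult_le_pos.
    - apply Rdiv_le_0_compat; [apply pow_le; lra | apply INR_fact_lt_0].
    - apply deriv_poly_tan_ge0, Hv. }
  pose proof (sum_f_R0_ge_last _ n (fun m => Hterm m u ltac:(lra))).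
  pose proof (Hterm (S n) z ltac:(lra)).
  pose proof (INR_fact_lt_0 n). pose proof (pow_lt h n Hh).
  apply (Rmult_le_reg_l (h ^ n / INR (fact n))); [apply Rdiv_lt_0_compat; lra|].
  replace (h ^ n / INR (fact n) * (INR (fact n) * tan (u + h) / h ^ n)) with (tan (u + h))
    by (field; lra).
  lra.
Qed.

Definition cot_minus_inv (t : R) : R := cot t - / t.

Definition cot_defect (n : nat) (t : R) : R :=
  deriv_poly n (cot t) - INR (fact n) / t ^ S n.

Lemma is_derive_fact_div_pow n t :
  t <> 0 -> is_derive (fun s => INR (fact n) / s ^ S n) t (- (INR (fact (S n)) / t ^ S (S n))).
Proof.
  intros Ht. auto_derive; [apply (pow_nonzero t (S n)), Ht|].
  change (match n with 0%nat => 1 | S _ => INR n + 1 end) with (INR (S n)).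
  rewrite fact_simpl, mult_INR. pose proof (pow_nonzero t n Ht).
  simpl pow. field. split; assumption.
Qed.

Lemma is_derive_cot_defect n t : 0 < t < PI -> is_derive (cot_defect n) t (- cot_defect (S n) t).
Proof.
  intros Ht. unfold cot_defect.
  replace (- (deriv_poly (S n) (cot t) - INR (fact (S n)) / t ^ S (S n)))
    with (- deriv_poly (S n) (cot t) - - (INR (fact (S n)) / t ^ S (S n))) by ring.
  apply (is_derive_minus (fun s => deriv_poly n (cot s)) (fun s => INR (fact n) / s ^ S n)).
  - apply is_derive_deriv_poly_cot, Ht.
  - apply is_derive_fact_div_pow. lra.
Qed.

Lemma taylor_cot_minus_inv n x y :
  0 < x < PI -> 0 < y < PI ->
  exists z, Rmin x y <= z <= Rmax x y /\
    cot_minus_inv y = sum_f_R0 (fun m => (y - x) ^ m / INR (fact m) * ((-1) ^ m * cot_defect m x)) n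
                      + (y - x) ^ S n / INR (fact (S n)) * ((-1) ^ S n * cot_defect (S n) z).
Proof.
  apply (taylor_lagrange_closed_form cot_minus_inv (fun k t => (-1) ^ k * cot_defect k t) 0 PI).
  - intros t Ht. unfold cot_minus_inv, cot_defect. rewrite deriv_poly_O. simpl. field. lra.
  - intros k t Ht. replace ((-1) ^ S k * cot_defect (S k) t) with ((-1) ^ k * - cot_defect (S k) t)
      by (simpl; ring).
    apply is_derive_scal, is_derive_cot_defect, Ht.
Qed.

Lemma cot_half t : 0 < t < PI -> cot t = / 2 * (cot (t / 2) - tan (t / 2)).
Proof.
  intros Ht. pose proof PI_gt_3.
  pose proof (sin_gt_0 (t / 2) ltac:(lra) ltac:(lra)).
  pose proof (cos_gt_0 (t / 2) ltac:(lra) ltac:(lra)).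
  unfold cot, tan. replace t with (2 * (t / 2)) at 1 2 by field.
  rewrite sin_2a, cos_2a. field. lra.
Qed.

Lemma is_derive_comp_half (h : R -> R) t d :
  is_derive h (t / 2) d -> is_derive (fun s => h (s / 2)) t (/ 2 * d).
Proof.
  intros H. apply (is_derive_comp h (fun s => s / 2)); [exact H|].
  auto_derive; [exact I | ring].
Qed.

(* The k-th derivative of [s |-> cot s - (cot (s/2) - tan (s/2)) / 2], which vanishes
   on [(0, PI)] by [cot_half]. *)
Definition cot_half_residual (k : nat) (s : R) : R :=
  (-1) ^ k * (deriv_poly k (cot s) - / 2 ^ S k * deriv_poly k (cot (s / 2)))
  + / 2 ^ S k * deriv_poly k (tan (s / 2)).

Lemma is_derive_cot_half_residual k s : 0 < s < PI ->
  is_derive (cot_half_residual k) s (cot_half_residual (S k) s).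
Proof.
  intros Hs. pose proof PI_gt_3.
  assert (Hcot2 : is_derive (fun s => deriv_poly k (cot (s / 2))) s
                    (/ 2 * - deriv_poly (S k) (cot (s / 2))))
    by (apply (is_derive_comp_half (fun s => deriv_poly k (cot s))),
              is_derive_deriv_poly_cot; lra).
  assert (Htan2 : is_derive (fun s => deriv_poly k (tan (s / 2))) s
                    (/ 2 * deriv_poly (S k) (tan (s / 2))))
    by (apply (is_derive_comp_half (fun s => deriv_poly k (tan s))),
              is_derive_deriv_poly_tan; lra).
  replace (cot_half_residual (S k) s)
    with ((-1) ^ k * (- deriv_poly (S k) (cot s)
                      - / 2 ^ S k * (/ 2 * - deriv_poly (S k) (cot (s / 2))))
          + / 2 ^ S k * (/ 2 * deriv_poly (S k) (tan (s / 2)))).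
  2:{ unfold cot_half_residual. pose proof (pow_nonzero 2 k ltac:(lra)). simpl. field. assumption. }
  apply (is_derive_plus (fun s => (-1) ^ k * _) (fun s => / 2 ^ S k * _));
    apply is_derive_scal; [|exact Htan2].
  apply (is_derive_minus (fun s => deriv_poly k (cot s))); [apply is_derive_deriv_poly_cot, Hs|].
  apply is_derive_scal, Hcot2.
Qed.

Lemma deriv_poly_cot_half n t : 0 < t < PI ->
  deriv_poly n (cot t) =
  / 2 ^ S n * (deriv_poly n (cot (t / 2)) - (-1) ^ n * deriv_poly n (tan (t / 2))).
Proof.
  intros Ht.
  assert (Hzero : cot_half_residual n t = 0).
  { destruct (Derive_n_closed_form (fun _ => 0) cot_half_residual 0 PI
                ltac:(intros s Hs; unfold cot_half_residual;
                      rewrite !deriv_poly_O, (cot_half s Hs); simpl; field)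
                is_derive_cot_half_residual n t Ht) as [<- _].
    destruct n; [reflexivity | apply Derive_n_const]. }
  assert (Hsign : (-1) ^ n * (-1) ^ n = 1)
    by (rewrite <- Rpow_mult_distr, <- (pow1 n); f_equal; ring).
  unfold cot_half_residual in Hzero.
  apply (Rmult_eq_reg_l ((-1) ^ n)); [|apply pow_nonzero; lra].
  transitivity ((-1) ^ n * / 2 ^ S n * deriv_poly n (cot (t / 2))
                - ((-1) ^ n * (-1) ^ n) * / 2 ^ S n * deriv_poly n (tan (t / 2)));
    [rewrite Hsign; lra | ring].
Qed.

Lemma cot_defect_half n t : 0 < t < PI ->
  cot_defect n t = / 2 ^ S n * (cot_defect n (t / 2) - (-1) ^ n * deriv_poly n (tan (t / 2))).
Proof.
  intros Ht. unfold cot_defect. rewrite (deriv_poly_cot_half n t Ht).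
  unfold Rdiv. rewrite Rpow_mult_distr, pow_inv.
  pose proof (pow_nonzero 2 (S n) ltac:(lra)). pose proof (pow_nonzero t (S n) ltac:(lra)).
  field. split; assumption.
Qed.

Lemma inv_pow2_S_le_half n : 0 < / 2 ^ S n <= / 2.
Proof.
  pose proof (pow_R1_Rle 2 n ltac:(lra)). simpl.
  split; [apply Rinv_0_lt_compat; lra | apply Rinv_le_contravar; lra].
Qed.

Lemma cot_defect_iter n J t : 0 < t < PI ->
  Rabs (cot_defect n t) <=
  (/ 2 ^ S n) ^ J * Rabs (cot_defect n (t / 2 ^ J)) + / 2 ^ n * deriv_poly n (tan (t / 2)).
Proof.
  pose proof PI_gt_3. destruct (inv_pow2_S_le_half n) as [Hq0 Hq1].
  set (q := / 2 ^ S n) in *.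
  assert (Hq : / 2 ^ n = 2 * q) by (unfold q; simpl; field; apply pow_nonzero; lra).
  rewrite Hq. revert t; induction J as [|J IHJ]; intros t Ht.
  - rewrite !pow_O, Rdiv_1_r. pose proof (deriv_poly_tan_ge0 n (t / 2) ltac:(lra)). nra.
  - assert (IH := IHJ (t / 2) ltac:(lra)).
    replace (t / 2 / 2 ^ J) with (t / 2 ^ S J) in IH
      by (simpl; field; apply pow_nonzero; lra).
    pose proof (deriv_poly_tan_ge0 n (t / 2) ltac:(lra)).
    pose proof (deriv_poly_tan_ge0 n (t / 2 / 2) ltac:(lra)).
    assert (Hhalf : Rabs (cot_defect n t) <=
                    q * Rabs (cot_defect n (t / 2)) + q * deriv_poly n (tan (t / 2))).
    { rewrite (cot_defect_half n t Ht). fold q.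
      rewrite Rabs_mult, (Rabs_right q) by lra.
      pose proof (Rabs_triang (cot_defect n (t / 2)) (- ((-1) ^ n * deriv_poly n (tan (t / 2)))))
        as Htri.
      rewrite Rabs_Ropp, Rabs_mult, pow_1_abs, Rmult_1_l, (Rabs_right (deriv_poly _ _)) in Htri
        by lra.
      apply Rmult_le_compat_l with (r := q) in Htri; [unfold Rminus; lra | lra]. }
    assert (Hmono : deriv_poly n (tan (t / 2 / 2)) <= deriv_poly n (tan (t / 2))).
    { apply deriv_poly_le_compat; [left; apply tan_gt_0; lra|].
      left. apply tan_increasing; lra. }
    assert (2 * q * deriv_poly n (tan (t / 2 / 2)) <= deriv_poly n (tan (t / 2))) by nra.
    change (q ^ S J) with (q * q ^ J). nra.
Qed.

Lemma mul_cot_bounds s : 0 < s <= 1 -> 1 - s ^ 2 / 2 <= s * cot s <= 1.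
Proof.
  intros Hs. pose proof PI_gt_3.
  pose proof (sin_gt_0 s ltac:(lra) ltac:(lra)). pose proof (sin_lt_x s ltac:(lra)).
  destruct (cos_bound s 0 ltac:(lra) ltac:(lra)) as [Hcl Hcu].
  destruct (sin_bound s 0 ltac:(lra) ltac:(lra)) as [Hsl _].
  unfold cos_approx, sin_approx, cos_term, sin_term in *. simpl in Hcl, Hcu, Hsl.
  assert (Hcos : 1 - s ^ 2 / 2 <= cos s <= 1 - s ^ 2 / 2 + s ^ 4 / 24) by (simpl; lra).
  assert (Hsin : s - s ^ 3 / 6 <= sin s) by (simpl; lra).
  unfold cot. replace (s * (cos s / sin s)) with (s * cos s / sin s) by (field; lra).
  split.
  - apply Rle_trans with (cos s); [lra|].
    apply Rmult_le_reg_r with (sin s); [lra|].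
    replace (s * cos s / sin s * sin s) with (s * cos s) by (field; lra).
    assert (0 <= cos s) by (simpl in Hcos; nra).
    rewrite (Rmult_comm s). apply Rmult_le_compat_l; lra.
  - apply Rmult_le_reg_r with (sin s); [lra|].
    replace (s * cos s / sin s * sin s) with (s * cos s) by (field; lra).
    assert (s * cos s <= s * (1 - s ^ 2 / 2 + s ^ 4 / 24)) by (apply Rmult_le_compat_l; lra).
    assert (0 <= s ^ 3 * (1 / 3 - s ^ 2 / 24)) by (apply Rmult_le_pos; [apply pow_le | simpl]; nra).
    nra.
Qed.

Lemma one_sub_pow_le w m : 0 <= w <= 1 -> 1 - w ^ m <= INR m * (1 - w).
Proof.
  intros Hw. induction m as [|m IHm]; [simpl; lra|].
  rewrite S_INR. simpl.
  pose proof (pow_le w m (proj1 Hw)). pose proof (pow_incr w 1 m Hw) as Hwm. rewrite pow1 in Hwm.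
  nra.
Qed.

Lemma deriv_poly_lower_scaled n s c : 0 < s <= 1 -> 0 <= s * c <= 1 ->
  0 <= s ^ S n * sum_f_R0 (fun j => deriv_poly_coef n j * c ^ j) n <= s * deriv_poly n 1.
Proof.
  intros Hs Hsc.
  assert (Hterm : forall j, (j <= n)%nat ->
            0 <= deriv_poly_coef n j * c ^ j * s ^ S n <= deriv_poly_coef n j * s).
  { intros j Hj. pose proof (deriv_poly_coef_ge0 n j).
    replace (deriv_poly_coef n j * c ^ j * s ^ S n)
      with (deriv_poly_coef n j * ((s * c) ^ j * (s * s ^ (n - j)))).
    2:{ rewrite Rpow_mult_distr. replace (S n) with (j + S (n - j))%nat by lia.
        rewrite pow_add. simpl. ring. }
    pose proof (pow_le (s * c) j (proj1 Hsc)). pose proof (pow_incr (s * c) 1 j Hsc).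
    pose proof (pow_le s (n - j) ltac:(lra)). pose proof (pow_incr s 1 (n - j) ltac:(lra)).
    rewrite pow1 in *.
    assert (0 <= s * s ^ (n - j) <= s) by (split; [apply Rmult_le_pos|]; nra).
    split; [apply Rmult_le_pos; [|apply Rmult_le_pos] | apply Rmult_le_compat_l]; nra. }
  rewrite scal_sum. split.
  - apply Rle_trans with (sum_f_R0 (fun _ => 0) n); [rewrite sum_cte; lra|].
    apply sum_Rle. intros j Hj. apply Hterm, Hj.
  - apply Rle_trans with (sum_f_R0 (fun j => deriv_poly_coef n j * s) n).
    + apply sum_Rle. intros j Hj. apply Hterm, Hj.
    + rewrite <- scal_sum. apply Rmult_le_compat_l; [lra|].
      unfold deriv_poly. rewrite tech5, pow1.
      pose proof (deriv_poly_coef_ge0 n (S n)).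
      rewrite (sum_eq (fun j => deriv_poly_coef n j * 1 ^ j) (deriv_poly_coef n))
        by (intros j _; rewrite pow1; ring).
      lra.
Qed.

(* The leading term [n! (s cot s)^(n+1)] of [s^(n+1) P_n(cot s)] tends to [n!],
   the lower-order terms are [O(s)]. *)
Lemma cot_defect_near0 n s : 0 < s <= 1 ->
  s ^ S n * Rabs (cot_defect n s) <= s * (INR (fact n) * INR (S n) + deriv_poly n 1).
Proof.
  intros Hs. destruct (mul_cot_bounds s Hs) as [Hw1 Hw2].
  set (w := s * cot s) in *.
  assert (Hw : 0 <= w <= 1) by (simpl in Hw1; nra).
  destruct (deriv_poly_lower_scaled n s (cot s) Hs Hw) as [Hlo Hhi].
  pose proof (pow_lt s (S n) (proj1 Hs)).
  assert (Hsplit : s ^ S n * cot_defect n s =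
                   s ^ S n * sum_f_R0 (fun j => deriv_poly_coef n j * cot s ^ j) n
                   - INR (fact n) * (1 - w ^ S n)).
  { unfold cot_defect, deriv_poly, w. rewrite tech5, deriv_poly_coef_lead, Rpow_mult_distr.
    field. lra. }
  assert (Hlead : 0 <= 1 - w ^ S n <= INR (S n) * s).
  { pose proof (pow_incr w 1 (S n) Hw) as Hwn. rewrite pow1 in Hwn.
    pose proof (one_sub_pow_le w (S n) Hw). pose proof (pos_INR (S n)).
    split; [lra|]. simpl in Hw1. nra. }
  pose proof (INR_fact_lt_0 n).
  rewrite <- (Rabs_right (s ^ S n)), <- Rabs_mult, Hsplit by lra.
  apply Rabs_le. split; nra.
Qed.

Lemma le_of_le_add_geom a b C : (forall J, a <= b + C * (/ 2) ^ J) -> a <= b.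
Proof.
  intros H.
  assert (Hlim : is_lim_seq (fun J => b + C * (/ 2) ^ J) (b + C * 0)).
  { apply is_lim_seq_plus'; [apply is_lim_seq_const|].
    apply is_lim_seq_mult'; [apply is_lim_seq_const | apply is_lim_seq_geom].
    rewrite Rabs_right; lra. }
  rewrite Rmult_0_r, Rplus_0_r in Hlim.
  exact (is_lim_seq_le (fun _ => a) _ a b H (is_lim_seq_const a) Hlim).
Qed.

Lemma cot_defect_bound n t : 0 < t < PI ->
  Rabs (cot_defect n t) <= / 2 ^ n * deriv_poly n (tan (t / 2)).
Proof.
  intros Ht. pose proof PI_gt_3. pose proof PI_4.
  set (K := INR (fact n) * INR (S n) + deriv_poly n 1).
  assert (HK : 0 <= K).
  { pose proof (deriv_poly_ge0 n 1 ltac:(lra)).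
    pose proof (pos_INR (fact n)). pose proof (pos_INR (S n)). unfold K. nra. }
  apply (le_of_le_add_geom _ _ (K / t ^ n)). intros J.
  (* the shift by 2 makes [s <= 1], as [t < 4] *)
  set (s := t / 2 ^ (J + 2)).
  pose proof (pow_lt 2 J ltac:(lra)).
  assert (Hs : 0 < s <= 1).
  { assert (4 <= 2 ^ (J + 2))
      by (pose proof (pow_R1_Rle 2 J ltac:(lra)); rewrite pow_add; simpl; lra).
    unfold s. split; [apply Rdiv_lt_0_compat; lra|].
    apply Rmult_le_reg_r with (2 ^ (J + 2)); [lra|].
    unfold Rdiv. rewrite Rmult_assoc, Rinv_l; lra. }
  pose proof (pow_lt t n ltac:(lra)).
  assert (Hfar : (/ 2 ^ S n) ^ (J + 2) * Rabs (cot_defect n s) <= K / t ^ n * (/ 2) ^ J).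
  { replace ((/ 2 ^ S n) ^ (J + 2) * Rabs (cot_defect n s))
      with (s ^ S n * Rabs (cot_defect n s) / t ^ S n).
    2:{ unfold s, Rdiv. rewrite Rpow_mult_distr, !pow_inv, <- !pow_mult, Nat.mul_comm.
        field. split; apply pow_nonzero; lra. }
    replace (K / t ^ n * (/ 2) ^ J) with (4 * s * K / t ^ S n).
    2:{ unfold s. rewrite pow_add, pow_inv. simpl. field. lra. }
    unfold Rdiv. apply Rmult_le_compat_r; [left; apply Rinv_0_lt_compat, pow_lt; lra|].
    pose proof (cot_defect_near0 n s Hs) as Hnear. fold K in Hnear. nra. }
  pose proof (cot_defect_iter n (J + 2) t Ht) as Hiter. fold s in Hiter. lra.
Qed.

Lemma tan_le_5 v : 0 <= v <= PI / 2 - 0.22 -> tan v <= 5.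
Proof.
  intros Hv. pose proof PI_gt_3.
  set (d := PI / 2 - v).
  assert (Hsd : 0.2 <= sin d).
  { destruct (sin_bound 0.22 0 ltac:(lra) ltac:(lra)) as [Hl _].
    unfold sin_approx, sin_term in Hl. simpl in Hl.
    apply Rle_trans with (sin 0.22); [lra|].
    apply sin_incr_1; unfold d; lra. }
  unfold tan. replace v with (PI / 2 - d) by (unfold d; ring).
  rewrite sin_shift, cos_shift.
  pose proof (COS_bound d).
  apply Rmult_le_reg_r with (sin d); [lra|].
  replace (cos d / sin d * sin d) with (cos d) by (field; lra). lra.
Qed.

Lemma cot_defect_le n z : 0 < z <= PI / 2 - 0.44 ->
  Rabs (cot_defect n z) <= 5 * INR (fact n) / (PI / 2) ^ n.
Proof.
  intros Hz. pose proof PI_gt_3.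
  eapply Rle_trans; [apply cot_defect_bound; lra|].
  eapply Rle_trans.
  { apply Rmult_le_compat_l; [left; apply Rinv_0_lt_compat, pow_lt; lra|].
    apply (deriv_poly_tan_le n (z / 2) (PI / 4)); lra. }
  pose proof (INR_fact_lt_0 n). pose proof (pow_lt (PI / 4) n ltac:(lra)).
  pose proof (tan_le_5 (z / 2 + PI / 4) ltac:(lra)).
  replace (/ 2 ^ n * (INR (fact n) * tan (z / 2 + PI / 4) / (PI / 4) ^ n))
    with (tan (z / 2 + PI / 4) * INR (fact n) / (PI / 2) ^ n).
  2:{ replace (PI / 2) with (2 * (PI / 4)) by field. rewrite Rpow_mult_distr.
      field. split; [lra | apply pow_nonzero; lra]. }
  unfold Rdiv. apply Rmult_le_compat_r; [left; apply Rinv_0_lt_compat, pow_lt; lra|].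
  apply Rmult_le_compat_r; lra.
Qed.

Lemma inv_sub_geom_sum a t m : a <> 0 -> t <> 0 ->
  / t - sum_f_R0 (fun k => (a - t) ^ k / a ^ S k) m = ((a - t) / a) ^ S m / t.
Proof.
  intros Ha Ht. induction m as [|m IHm]; [simpl; field; split; assumption|].
  rewrite tech5.
  replace (/ t - (sum_f_R0 (fun k => (a - t) ^ k / a ^ S k) m + (a - t) ^ S m / a ^ S (S m)))
    with ((/ t - sum_f_R0 (fun k => (a - t) ^ k / a ^ S k) m) - (a - t) ^ S m / a ^ S (S m))
    by ring.
  rewrite IHm. unfold Rdiv. rewrite !Rpow_mult_distr, !pow_inv.
  pose proof (pow_nonzero a (S m) Ha).
  change (a ^ S (S m)) with (a * a ^ S m).
  change ((a - t) ^ S (S m)) with ((a - t) * (a - t) ^ S m).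
  field. repeat split; assumption.
Qed.

Lemma sum_f_R0_even_odd (u : nat -> R) n :
  sum_f_R0 (fun m => u (2 * m)%nat) n + sum_f_R0 (fun m => u (2 * m + 1)%nat) n =
  sum_f_R0 u (2 * n + 1).
Proof.
  induction n as [|n IHn]; [simpl; ring|].
  rewrite !tech5. replace (2 * S n + 1)%nat with (S (S (2 * n + 1))) by lia.
  rewrite (tech5 u (S (2 * n + 1))), (tech5 u (2 * n + 1)), <- IHn.
  replace (2 * S n)%nat with (S (2 * n + 1)) by lia.
  replace (S (2 * n + 1) + 1)%nat with (S (S (2 * n + 1))) by lia. ring.
Qed.

Definition phi_slope : R := PI / (2 * sqrt 6).

Lemma sqrt6_gt : 2.449 < sqrt 6.
Proof.
  pose proof (sqrt_sqrt 6 ltac:(lra)). pose proof (sqrt_pos 6). nra.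
Qed.

Lemma phi_cot x : phi x = cot (PI / 4 + phi_slope * x).
Proof.
  unfold phi, phi_slope. pose proof sqrt6_gt. f_equal. field. lra.
Qed.

Lemma phi_slope_sq : phi_slope ^ 2 = PI ^ 2 / 24.
Proof.
  unfold phi_slope. pose proof sqrt6_gt. pose proof (sqrt_sqrt 6 ltac:(lra)).
  replace 24 with (4 * (sqrt 6 * sqrt 6)) by lra. field. lra.
Qed.

Lemma phi_slope_half_le : 0 < phi_slope / 2 <= PI / 4 - 0.44.
Proof.
  pose proof sqrt6_gt. pose proof PI_gt_3. unfold phi_slope.
  split; [apply Rdiv_lt_0_compat; [apply Rdiv_lt_0_compat|]; lra|].
  assert (PI / (2 * sqrt 6) <= PI / (2 * 2.449)).
  { apply Rmult_le_compat_l; [lra|]. apply Rinv_le_contravar; lra. }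
  lra.
Qed.

Lemma Derive_n_phi_0 k :
  Derive_n phi k 0 = (- phi_slope) ^ k * deriv_poly k (cot (PI / 4)).
Proof.
  pose proof phi_slope_half_le. pose proof PI_gt_3.
  set (g := fun k x => (- phi_slope) ^ k * deriv_poly k (cot (PI / 4 + phi_slope * x))).
  replace (cot (PI / 4)) with (cot (PI / 4 + phi_slope * 0)) by (f_equal; ring).
  refine (proj1 (Derive_n_closed_form phi g (- (1 / 2)) (1 / 2) _ _ k 0 ltac:(lra))).
  - intros x _. unfold g. rewrite phi_cot, deriv_poly_O. simpl. ring.
  - intros j x Hx. unfold g.
    replace ((- phi_slope) ^ S j * deriv_poly (S j) (cot (PI / 4 + phi_slope * x)))
      with ((- phi_slope) ^ j * (phi_slope * - deriv_poly (S j) (cot (PI / 4 + phi_slope * x))))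
      by (simpl; ring).
    apply is_derive_scal.
    apply (is_derive_comp (fun t => deriv_poly j (cot t)) (fun x => PI / 4 + phi_slope * x)).
    + apply is_derive_deriv_poly_cot. split; nra.
    + auto_derive; [exact I | ring].
Qed.

Lemma phi_slope_mul_le x : Rabs x <= 1 / 2 -> Rabs (phi_slope * x) <= phi_slope / 2.
Proof.
  intros Hx. pose proof phi_slope_half_le.
  rewrite Rabs_mult, Rabs_right by lra.
  apply Rmult_le_compat_l with (r := phi_slope) in Hx; lra.
Qed.

(* [cot = (cot - 1/t) + 1/t] around [PI/4]: Lagrange remainder for the first part,
   exact geometric remainder for the second. *)
Lemma phi_taylor_remainder n x : Rabs x <= 1 / 2 ->
  exists z, 0 < z <= PI / 2 - 0.44 /\
    phi x - sum_f_R0 (fun k => Derive_n phi k 0 / INR (fact k) * x ^ k) n =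
    (phi_slope * x) ^ S n / INR (fact (S n)) * ((-1) ^ S n * cot_defect (S n) z)
    + (- (phi_slope * x) / (PI / 4)) ^ S n / (PI / 4 + phi_slope * x).
Proof.
  intros Hx. pose proof phi_slope_half_le. pose proof PI_gt_3.
  pose proof (proj1 (Rabs_le_between _ _) (phi_slope_mul_le x Hx)) as Hax.
  set (tau := PI / 4). set (t := tau + phi_slope * x).
  destruct (taylor_cot_minus_inv n tau t ltac:(unfold tau; lra) ltac:(unfold t, tau; lra))
    as [z [Hz E]].
  exists z. split.
  { unfold Rmin, Rmax in Hz. destruct (Rle_dec tau t); unfold t, tau in *; lra. }
  replace (t - tau) with (phi_slope * x) in E by (unfold t; ring).
  pose proof (inv_sub_geom_sum tau t n ltac:(unfold tau; lra) ltac:(unfold t, tau; lra)) as G.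
  replace (tau - t) with (- (phi_slope * x)) in G by (unfold t; ring).
  assert (Hcoef : forall k, Derive_n phi k 0 / INR (fact k) * x ^ k =
            (phi_slope * x) ^ k / INR (fact k) * ((-1) ^ k * cot_defect k tau)
            + (- (phi_slope * x)) ^ k / tau ^ S k).
  { intros k. rewrite Derive_n_phi_0. fold tau. unfold cot_defect.
    replace (- (phi_slope * x)) with (-1 * (phi_slope * x)) by ring.
    replace (- phi_slope) with (-1 * phi_slope) by ring.
    rewrite !Rpow_mult_distr. pose proof (INR_fact_lt_0 k).
    pose proof (pow_nonzero tau (S k) ltac:(unfold tau; lra)). field. lra. }
  rewrite (sum_eq _ _ n (fun k _ => Hcoef k)), plus_sum, phi_cot. fold tau t.
  replace (cot t) with (cot_minus_inv t + / t) by (unfold cot_minus_inv; ring).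
  rewrite E. lra.
Qed.

Lemma phi_slope_ratio_sq x : (phi_slope * x / (PI / 2)) ^ 2 = / 4 * (2 / 3 * x ^ 2).
Proof.
  pose proof PI_gt_3. unfold Rdiv. rewrite !Rpow_mult_distr, phi_slope_sq. field. lra.
Qed.

Lemma phi_defect_term_le m x z : Rabs x <= 1 / 2 -> 0 < z <= PI / 2 - 0.44 ->
  Rabs ((phi_slope * x) ^ (2 * m) / INR (fact (2 * m)) * ((-1) ^ (2 * m) * cot_defect (2 * m) z))
  <= 5 * (/ 4) ^ m * (2 / 3 * x ^ 2) ^ m.
Proof.
  intros Hx Hz. pose proof PI_gt_3. pose proof (INR_fact_lt_0 (2 * m)).
  rewrite pow_1_even, Rmult_1_l, Rabs_mult, Rabs_right.
  2:{ apply Rle_ge, Rdiv_le_0_compat; [|lra]. rewrite pow_mult. apply pow_le, pow2_ge_0. }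
  eapply Rle_trans.
  { apply Rmult_le_compat_l; [|apply cot_defect_le, Hz].
    apply Rdiv_le_0_compat; [|lra]. rewrite pow_mult. apply pow_le, pow2_ge_0. }
  replace ((phi_slope * x) ^ (2 * m) / INR (fact (2 * m))
           * (5 * INR (fact (2 * m)) / (PI / 2) ^ (2 * m)))
    with (5 * ((phi_slope * x / (PI / 2)) ^ 2) ^ m).
  2:{ rewrite <- pow_mult. unfold Rdiv. rewrite Rpow_mult_distr, pow_inv.
      pose proof (pow_nonzero (PI / 2) (2 * m) ltac:(lra)). field. split; [assumption | lra]. }
  rewrite phi_slope_ratio_sq, Rpow_mult_distr. lra.
Qed.

Lemma phi_geom_term_le m x : Rabs x <= 1 / 2 ->
  Rabs ((- (phi_slope * x) / (PI / 4)) ^ (2 * m) / (PI / 4 + phi_slope * x))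
  <= (2 / 3 * x ^ 2) ^ m / 0.44.
Proof.
  intros Hx. pose proof PI_gt_3. pose proof phi_slope_half_le.
  pose proof (proj1 (Rabs_le_between _ _) (phi_slope_mul_le x Hx)).
  assert (Hsq : (- (phi_slope * x) / (PI / 4)) ^ 2 = 2 / 3 * x ^ 2).
  { unfold Rdiv. rewrite !Rpow_mult_distr, <- Rsqr_pow2, <- Rsqr_neg, Rsqr_pow2,
      Rpow_mult_distr, phi_slope_sq. field. lra. }
  rewrite pow_mult, Hsq, Rabs_right.
  2:{ apply Rle_ge, Rdiv_le_0_compat; [apply pow_le; pose proof (pow2_ge_0 x) | ]; lra. }
  unfold Rdiv. apply Rmult_le_compat_l; [apply pow_le; pose proof (pow2_ge_0 x); lra|].
  apply Rinv_le_contravar; lra.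
Qed.

Lemma phi_taylor_error_le N x : (3 <= N)%nat -> Rabs x <= 1 / 2 ->
  Rabs (phi x - sum_f_R0 (fun k => Derive_n phi k 0 / INR (fact k) * x ^ k) (2 * N + 3))
  <= 23 / 10 * (2 / 3) ^ (N + 2) * x ^ (2 * N + 4).
Proof.
  intros HN Hx.
  destruct (phi_taylor_remainder (2 * N + 3) x Hx) as [z [Hz ->]].
  replace (S (2 * N + 3)) with (2 * (N + 2))%nat by lia.
  replace (2 * N + 4)%nat with (2 * (N + 2))%nat by lia.
  set (m := (N + 2)%nat).
  pose proof (phi_defect_term_le m x z Hx Hz). pose proof (phi_geom_term_le m x Hx).
  assert (Hquarter : (/ 4) ^ m <= / 1024).
  { replace (/ 1024) with ((/ 4) ^ 5) by field.
    replace m with (5 + (m - 5))%nat by (unfold m; lia). rewrite pow_add.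
    pose proof (pow_le (/ 4) (m - 5) ltac:(lra)). pose proof (pow_incr (/ 4) 1 (m - 5) ltac:(lra)).
    rewrite pow1 in *. simpl. nra. }
  assert (HZ : 0 <= (2 / 3 * x ^ 2) ^ m) by (apply pow_le; pose proof (pow2_ge_0 x); lra).
  replace (23 / 10 * (2 / 3) ^ m * x ^ (2 * m)) with (23 / 10 * (2 / 3 * x ^ 2) ^ m)
    by (rewrite Rpow_mult_distr, <- pow_mult; ring).
  eapply Rle_trans; [apply Rabs_triang|].
  assert (5 * (/ 4) ^ m * (2 / 3 * x ^ 2) ^ m <= 5 / 1024 * (2 / 3 * x ^ 2) ^ m) by nra.
  unfold Rdiv in *. lra.
Qed.

Theorem lemma3p4 (N : nat) (HN : (3 <= N)%nat) :
  exists (d : nat) (c : nat -> R),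
    forall x : R, Rabs x <= 1 / 2 ->
      Rabs (phi x - even_taylor N x - odd_poly d c x)
        <= (23 / 10) * (2 / 3) ^ (N + 2) * x ^ (2 * N + 4).
Proof.
  exists (N + 1)%nat, (fun k => Derive_n phi (2 * k + 1) 0 / INR (fact (2 * k + 1))).
  intros x Hx.
  replace (phi x - _ - _)
    with (phi x - sum_f_R0 (fun k => Derive_n phi k 0 / INR (fact k) * x ^ k) (2 * (N + 1) + 1)).
  - replace (2 * (N + 1) + 1)%nat with (2 * N + 3)%nat by lia.
    apply phi_taylor_error_le; assumption.
  - rewrite <- sum_f_R0_even_odd. unfold even_taylor, odd_poly. ring.
Qed.
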